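(* Let $\mathbf v\in\mathbb R^{n\times m}_{<0}$ with $n\ge2$. For each pair $\{i,i'\}$ of distinct agents let $\mathbf v^{\{i,i'\}}$ be the $2\times m$ matrix consisting of rows $i$ and $i'$ of $\mathbf v$. Let $\mathcal G(\mathbf v)$ be the set of all bipartite graphs $G$ on $([n],[m])$ obtained as follows: choose for every pair $\{i,i'\}$ a graph $G^{\{i,i'\}}\in\mathrm{MWW}(\mathbf v^{\{i,i'\}})$ (on agents $\{i,i'\}$ and chores $[m]$), and put an edge $(i,j)$ in $G$ iff $(i,j)$ is an edge of $G^{\{i,i'\}}$ for every $i'\ne i$. Then $|\mathcal G(\mathbf v)|\le(2m+1)^{n(n-1)/2}$ and $\mathrm{MWW}(\mathbf v)\subseteq\mathcal G(\mathbf v)$.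
   Context: For a matrix $\mathbf w\in\mathbb R^{k\times m}_{<0}$ with rows indexed by an agent set $A$ and $\tau\in\mathbb R^A_{>0}$, $G_\tau(\mathbf w)$ is the bipartite graph on $(A,[m])$ with edge $(i,j)$ iff $\tau_i|w_{i,j}|\le\tau_{i'}|w_{i',j}|$ for all $i'\in A$; $\mathrm{MWW}(\mathbf w)=\{G_\tau(\mathbf w):\tau\in\mathbb R^A_{>0}\}$. *)

From HB Require Import structures.
From mathcomp Require Import all_boot all_order all_algebra.
From Stdlib Require Import ClassicalEpsilon.
Set Implicit Arguments. Unset Strict Implicit. Unset Printing Implicit Defensive.
Import Order.TTheory GRing.Theory Num.Theory.
Local Open Scope ring_scope.

Definition asbool (P : Prop) : bool :=
  if excluded_middle_informative P then true else false.

Notation bgraph n m := {set 'I_n * 'I_m}.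

(* G_tau(w) for the submatrix w of v consisting of the rows in the agent set A:
   edge (i,j) (with i in A) iff tau_i |v_ij| <= tau_i' |v_i'j| for all i' in A. *)
Definition Gtau (R : realFieldType) (n m : nat) (A : {set 'I_n})
  (v : 'M[R]_(n, m)) (tau : 'I_n -> R) : bgraph n m :=
  [set e | (e.1 \in A) &&
     [forall i' in A, tau e.1 * `|v e.1 e.2| <= tau i' * `|v i' e.2|]].

Definition isMWW (R : realFieldType) (n m : nat) (A : {set 'I_n})
  (v : 'M[R]_(n, m)) (G : bgraph n m) : Prop :=
  exists tau : 'I_n -> R, (forall i, i \in A -> 0 < tau i) /\ G = Gtau A v tau.

Definition MWW (R : realFieldType) (n m : nat) (A : {set 'I_n})
  (v : 'M[R]_(n, m)) : {set bgraph n m} :=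
  [set G | asbool (isMWW A v G)].

(* G is in script-G(v): a choice C of a graph C{i,i'} in MWW(v^{i,i'}) for every
   unordered pair {i,i'} (C symmetric), with (i,j) in G iff (i,j) in C{i,i'}
   for every i' <> i. *)
Definition inGv (R : realFieldType) (n m : nat) (v : 'M[R]_(n, m))
  (G : bgraph n m) : Prop :=
  exists C : 'I_n -> 'I_n -> bgraph n m,
    (forall i i', C i i' = C i' i) /\
    (forall i i', i != i' -> C i i' \in MWW [set i; i'] v) /\
    G = [set e | [forall i' : 'I_n, (i' != e.1) ==> (e \in C e.1 i')]].

Definition Gv (R : realFieldType) (n m : nat) (v : 'M[R]_(n, m))
  : {set bgraph n m} := [set G | asbool (inGv v G)].

From HB Require Import structures.
From mathcomp Require Import all_boot all_order all_algebra.
From mathcomp Require Import zify.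
From Stdlib Require Import ClassicalEpsilon.
Import Order.TTheory GRing.Theory Num.Theory.
Local Open Scope ring_scope.

(* For tau > 0, the graph G_tau(v) lies in G(v): choose for the
   pair {i,i'} the graph G_tau(v^{i,i'}) built from the same tau; an edge
   (i,j) is minimal over all agents iff it is minimal against every single
   other agent.

   For two agents i <> i' every G in MWW(v^{i,i'}) is determined
   by the pair of chore sets X = {j | (i,j) notin G}, Y = {j | (i',j) in G},
   and these are the threshold sets {j | a j < r}, {j | a j <= r} of the
   ratio a j = |v i' j| / |v i j| at r = tau_i / tau_i'.  Threshold pairs are
   nested as r grows, so the sum #|X| + #|Y| in [0, 2m] determines them:
   |MWW(v^{i,i'})| <= 2m+1.  Hence every G in G(v) is the image of a function
   from the n(n-1)/2 unordered pairs to 'I_(2m+1) (the index of the chosen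
   two-agent graph), which gives the bound (2m+1)^(n(n-1)/2). *)

Lemma asboolE (P : Prop) : asbool P = true <-> P.
Proof. by rewrite /asbool; case: excluded_middle_informative. Qed.

Lemma inMWW (R : realFieldType) (n m : nat) (A : {set 'I_n})
  (v : 'M[R]_(n, m)) (G : bgraph n m) :
  G \in MWW A v <-> isMWW A v G.
Proof. by rewrite inE; exact: asboolE. Qed.

Lemma inGv (R : realFieldType) (n m : nat) (v : 'M[R]_(n, m)) (G : bgraph n m) :
  G \in Gv v <-> inGv v G.
Proof. by rewrite inE; exact: asboolE. Qed.

Lemma forall_set2 (T : finType) (x y : T) (P : pred T) :
  [forall k in [set x; y], P k] = P x && P y.
Proof.
apply/forallP/andP => [H|[Px Py] k].
  by split; [move/implyP: (H x) | move/implyP: (H y)]; apply; rewrite !inE eqxx ?orbT.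
by rewrite !inE; apply/implyP => /orP[/eqP->|/eqP->].
Qed.

Lemma Gtau_pairE (R : realFieldType) (n m : nat) (v : 'M[R]_(n, m))
  (tau : 'I_n -> R) (i i' : 'I_n) (j : 'I_m) :
  ((i, j) \in Gtau [set i; i'] v tau) = (tau i * `|v i j| <= tau i' * `|v i' j|).
Proof. by rewrite inE forall_set2 set21 lexx. Qed.

Lemma MWW_sub_Gv (R : realFieldType) (n m : nat) (v : 'M[R]_(n, m)) :
  MWW [set: 'I_n] v \subset Gv v.
Proof.
apply/subsetP => G /inMWW [tau [tau_pos ->]]; apply/inGv.
exists (fun i i' => Gtau [set i; i'] v tau); split; first by move=> i i'; rewrite setUC.
split; first by move=> i i' _; apply/inMWW; exists tau; split=> // k _; exact: tau_pos.
apply/setP => -[i j]; rewrite [in LHS]inE in_setT /= inE /=.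
apply: eq_forallb => k; rewrite in_setT Gtau_pairE /=.
by case: (eqVneq k i) => [->|_]; rewrite ?lexx.
Qed.

Definition below {T : finType} {R : realFieldType} (a : T -> R) (r : R) : {set T} :=
  [set j | a j < r].
Definition below_eq {T : finType} {R : realFieldType} (a : T -> R) (r : R) : {set T} :=
  [set j | a j <= r].

Lemma subset_pair_card_eq {T : finType} {X1 Y1 X2 Y2 : {set T}} :
  X1 \subset X2 -> Y1 \subset Y2 -> (#|X1| + #|Y1| = #|X2| + #|Y2|)%N ->
  X1 = X2 /\ Y1 = Y2.
Proof.
move=> sX sY e.
have cX := subset_leq_card sX; have cY := subset_leq_card sY.
have eX : #|X1| = #|X2| by lia.
have eY : #|Y1| = #|Y2| by lia.
by split; apply/eqP; rewrite eqEcard ?sX ?sY ?eX ?eY leqnn.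
Qed.

(* The total size of the two threshold sets at r determines both of them,
   since threshold sets grow with r. *)
Lemma threshold_card_inj (T : finType) (R : realFieldType) (a : T -> R) (r s : R) :
  (#|below a r| + #|below_eq a r| = #|below a s| + #|below_eq a s|)%N ->
  below a r = below a s /\ below_eq a r = below_eq a s.
Proof.
have mono : forall r s, r <= s ->
    below a r \subset below a s /\ below_eq a r \subset below_eq a s.
  move=> r1 s1 rs; split; apply/subsetP => j; rewrite !inE => h.
    exact: lt_le_trans h rs.
  exact: le_trans h rs.
move=> e; case/orP: (le_total r s) => rs; have [sX sY] := mono _ _ rs.
  exact: subset_pair_card_eq.
by have [-> ->] := subset_pair_card_eq sX sY (esym e).
Qed.

Section TwoAgents.

Variables (R : realFieldType) (n m : nat) (v : 'M[R]_(n, m)).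
Hypothesis v_neq0 : forall i j, v i j != 0.
Variables (i i' : 'I_n).
Hypothesis ii' : i != i'.

(* The ratio whose threshold sets describe the two-agent MWW graphs. *)
Let a (j : 'I_m) : R := `|v i' j| / `|v i j|.

Let X (G : bgraph n m) : {set 'I_m} := [set j | (i, j) \notin G].
Let Y (G : bgraph n m) : {set 'I_m} := [set j | (i', j) \in G].

Lemma MWW2_graphE {G : bgraph n m} : G \in MWW [set i; i'] v ->
  G = [set e | ((e.1 == i) && (e.2 \notin X G)) || ((e.1 == i') && (e.2 \in Y G))].
Proof.
move=> /inMWW [tau [_ ->]]; apply/setP => -[k j].
rewrite [in RHS]inE /= !inE /= negbK.
have i'i : (i' == i) = false by rewrite eq_sym (negbTE ii').
case: (eqVneq k i) => [->|_]; first by rewrite eqxx (negbTE ii') /= orbF.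
by case: (eqVneq k i') => [->|_]; rewrite ?eqxx ?i'i.
Qed.

Lemma MWW2_threshold {G : bgraph n m} : G \in MWW [set i; i'] v ->
  exists r, X G = below a r /\ Y G = below_eq a r.
Proof.
move=> /inMWW [tau [tau_pos ->]].
have t1 := tau_pos i (set21 _ _); have t2 := tau_pos i' (set22 _ _).
have vpos k j : 0 < `|v k j| by rewrite normr_gt0.
exists (tau i / tau i'); split; apply/setP => j.
  rewrite [in LHS]inE Gtau_pairE inE ltNge /a ler_pdivlMr // mulrAC ler_pdivrMr //.
  by rewrite [X in _ <= X]mulrC.
rewrite [in LHS]inE setUC Gtau_pairE inE /a ler_pdivlMr // mulrAC ler_pdivrMr //.
by rewrite [X in X <= _]mulrC.
Qed.

Let code (G : bgraph n m) : 'I_(2 * m).+1 := inord (#|X G| + #|Y G|).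

Lemma code_bound (G : bgraph n m) : (#|X G| + #|Y G| < (2 * m).+1)%N.
Proof.
rewrite ltnS mul2n -addnn.
by apply: leq_add; apply: leq_trans (max_card _) _; rewrite card_ord.
Qed.

Lemma card_MWW2 : (#|MWW [set i; i'] v| <= (2 * m).+1)%N.
Proof.
have code_inj : {in MWW [set i; i'] v &, injective code}.
  move=> G1 G2 h1 h2 /(congr1 (@nat_of_ord _)); rewrite /code !inordK ?code_bound //.
  have [r1 [hX1 hY1]] := MWW2_threshold h1; have [r2 [hX2 hY2]] := MWW2_threshold h2.
  rewrite hX1 hY1 hX2 hY2 => /threshold_card_inj[hX hY].
  by rewrite (MWW2_graphE h1) (MWW2_graphE h2) hX1 hY1 hX2 hY2 hX hY.
rewrite -(card_in_imset code_inj); apply: leq_trans (max_card _) _.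
by rewrite card_ord.
Qed.

End TwoAgents.

Definition agent_pair (n : nat) := {A : {set 'I_n} | #|A| == 2}.

Lemma card_agent_pair (n : nat) : #|{: agent_pair n}| = (n * (n - 1) %/ 2)%N.
Proof.
rewrite card_sig subn1 divn2 -bin2 -[in RHS](card_ord n) -card_draws.
by apply: eq_card => A; rewrite !inE.
Qed.

Lemma sym_enum_pair (T : finType) (U : Type) (f : T -> T -> U) (x0 x y : T) :
  (forall a b, f a b = f b a) -> x != y ->
  f (nth x0 (enum [set x; y]) 0) (nth x0 (enum [set x; y]) 1) = f x y.
Proof.
move=> f_sym xy; set s := enum [set x; y].
have size_s : size s = 2 by rewrite /s -cardE cards2 xy.
have s0 : nth x0 s 0 \in [set x; y] by rewrite -mem_enum mem_nth ?size_s.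
have s1 : nth x0 s 1 \in [set x; y] by rewrite -mem_enum mem_nth ?size_s.
have s01 : nth x0 s 0 != nth x0 s 1 by rewrite nth_uniq ?enum_uniq ?size_s.
move: s0 s1 s01; rewrite !inE.
by move=> /orP[/eqP->|/eqP->] /orP[/eqP->|/eqP->]; rewrite ?eqxx.
Qed.

Section Counting.

Variables (R : realFieldType) (n m : nat) (v : 'M[R]_(n, m)).
Hypothesis v_neq0 : forall i j, v i j != 0.

(* A code assigns to each unordered pair an index into the enumeration of its
   (at most 2m+1) two-agent MWW graphs. *)
Definition pair_code := {ffun agent_pair n -> 'I_(2 * m).+1}.

Definition chosen_graph (k : pair_code) (A : {set 'I_n}) : bgraph n m :=
  if insub A is Some p then nth set0 (enum (MWW A v)) (k p) else set0.

Definition decode (k : pair_code) : bgraph n m :=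
  [set e | [forall i' : 'I_n, (i' != e.1) ==> (e \in chosen_graph k [set e.1; i'])]].

Lemma Gv_sub_decode : (0 < n)%N -> Gv v \subset [set decode k | k in [set: pair_code]].
Proof.
move=> n_gt0; apply/subsetP => G /inGv [C [C_sym [C_MWW ->]]].
pose i0 : 'I_n := Ordinal n_gt0.
pose CA (A : {set 'I_n}) := C (nth i0 (enum A) 0) (nth i0 (enum A) 1).
pose k : pair_code :=
  [ffun p => inord (index (CA (val p)) (enum (MWW (val p) v)))].
have chosenE i i' : i != i' -> chosen_graph k [set i; i'] = C i i'.
  move=> ii'; have CAE : CA [set i; i'] = C i i' by exact: sym_enum_pair.
  have pA : #|[set i; i']| == 2 by rewrite cards2 ii'.
  rewrite /chosen_graph insubT ffunE /= CAE inordK.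
    by rewrite nth_index // mem_enum C_MWW.
  apply: leq_trans _ (@card_MWW2 R n m v v_neq0 _ _ ii').
  by rewrite cardE index_mem mem_enum C_MWW.
apply/imsetP; exists k; first by rewrite inE.
apply/setP => e; rewrite !inE; apply: eq_forallb => i'.
by case: (eqVneq i' e.1) => [//|ne] /=; rewrite chosenE // eq_sym.
Qed.

Lemma card_Gv : (0 < n)%N -> (#|Gv v| <= (2 * m + 1) ^ (n * (n - 1) %/ 2))%N.
Proof.
move=> n_gt0; apply: leq_trans (subset_leq_card (Gv_sub_decode n_gt0)) _.
apply: leq_trans (leq_imset_card _ _) _.
by rewrite cardsT card_ffun card_ord card_agent_pair addn1.
Qed.

End Counting.

Theorem proposition2 (R : realFieldType) (n m : nat) (v : 'M[R]_(n, m))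
  (hn : (2 <= n)%N) (hneg : forall i j, v i j < 0) :
  (#|Gv v| <= (2 * m + 1) ^ (n * (n - 1) %/ 2))%N /\
  MWW [set: 'I_n] v \subset Gv v.
Proof.
have v_neq0 i j : v i j != 0 by rewrite lt_eqF.
split; last exact: MWW_sub_Gv.
by apply: card_Gv => //; exact: ltnW.
Qed.
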